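(* Let $\mathcal A=(Q,\Sigma,\delta,\rho)$ be a connected bireversible Mealy automaton whose labeled orbit tree $\mathfrak t(\mathcal A)$ has no active self-liftable branch, and let $\mathfrak j$ be a jungle tree with trunk of length $n$. For a $\mathfrak j$-word $\mathbf u$ with $|\mathbf u|<n$, a $\sim$-class $\gamma$ of stems containing a stem with prefix $\mathbf u$, and an integer $k\ge0$ with $|\mathbf u|+k\le n$, let $N(\mathbf u,\gamma,k)$ be the number of words $\mathbf v\in Q^k$ such that $\mathbf{uv}$ is a prefix of some stem in $\gamma$. Then $N(\mathbf u,\gamma,k)$ depends only on $|\mathbf u|$ and $k$: if $(\mathbf u,\gamma,k)$ and $(\mathbf u',\gamma',k)$ are two such triples with $|\mathbf u|=|\mathbf u'|$, then $N(\mathbf u,\gamma,k)=N(\mathbf u',\gamma',k)$.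
   Context: Mealy automata. A Mealy automaton is $\mathcal A=(Q,\Sigma,\delta,\rho)$ with $Q,\Sigma$ finite non-empty sets, $\delta=(\delta_i\colon Q\to Q)_{i\in\Sigma}$, $\rho=(\rho_x\colon\Sigma\to\Sigma)_{x\in Q}$; transitions $x\xrightarrow{i\mid\rho_x(i)}\delta_i(x)$. Invertible: each $\rho_x$ a permutation of $\Sigma$; reversible: each $\delta_i$ a permutation of $Q$; bireversible: invertible, reversible, and for each $j\in\Sigma$ the map $x\mapsto\delta_{\rho_x^{-1}(j)}(x)$ is a permutation of $Q$. Connected: the directed graph on $Q$ with edges $x\to\delta_i(x)$ is connected. Extensions: $\rho_x(i\mathbf s)=\rho_x(i)\rho_{\delta_i(x)}(\mathbf s)$; $\rho_{x_1\cdots x_m}=\rho_{x_m}\circ\cdots\circ\rho_{x_1}$; $\delta_i(x\mathbf u)=\delta_i(x)\delta_{\rho_x(i)}(\mathbf u)$ on $Q^*$, $\delta_{i_1\cdots i_m}=\delta_{i_m}\circ\cdots\circ\delta_{i_1}$. The connected components of $\mathcal A^n$ (stateset $Q^n$, transitions $\mathbf u\xrightarrow{i\mid\rho_{\mathbf u}(i)}\delta_i(\mathbf u)$) are, for reversible $\mathcal A$, the orbits of $Q^n$ under the maps $\delta_{\mathbf s}$. Orbit tree $\mathfrak t(\mathcal A)$: vertices at level $n\ge0$ are the connected components of $\mathcal A^n$; an edge from the component of $\mathbf u\in Q^n$ to that of $\mathbf ux$ for all $\mathbf u,x$; edge $C\to D$ labeled $\#D/\#C$. $\top,\bot$ = first/last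 vertex of a downward path; level of an edge/path = level of its top vertex. A word of $Q^*\cup Q^\omega$ represents the initial path through the components of its prefixes. Edge $e$ is liftable to $f$ if every word of $\bot(e)$ has a suffix in $\bot(f)$; paths are liftable if corresponding edges are. $f$ is a legitimate child of $e$ if $\top(f)=\bot(e)$ and $f$ is liftable to $e$. A path/subtree $\mathfrak s$ is $k$-self-liftable if for all $i\ge0$ every path in $\mathfrak s$ starting at level $i+k$ is liftable to a path in $\mathfrak s$ starting at level $i$; self-liftable if $k$-self-liftable for some $k>0$. A branch (infinite initial path) is active if its labels are not eventually all $1$. Jungle trees: for a finite 1-self-liftable initial path $\mathbf e$ of length $n$ whose last edge has at least two legitimate children, all labeled $1$, $\mathfrak j(\mathbf e)$ consists of $\mathbf e$ plus all edges descending from $\bot(\mathbf e)$ that are liftable to the last edge of $\mathbf e$. Stems: the words of $\bot(\mathbf e)\subseteq Q^n$. A $\mathfrak j$-word is a word representing an initial path of $\mathfrak j$. For stems $\mathbf u,\mathbf v$: $\mathbf u\sim\mathbf v$ iff there is $\mathbf s\in Q^*$ such that $\mathbf{usv}$ is a $\mathfrak j$-word and $\rho_{\mathbf{us}}$ is the identity of $\Sigma^*$; $\sim$ is an equivalence relation. *)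

From mathcomp Require Import all_boot.
From Stdlib Require Import Relations ClassicalDescription.

Set Implicit Arguments.
Unset Strict Implicit.
Unset Printing Implicit Defensive.

Definition pbool (P : Prop) : bool :=
  if excluded_middle_informative P then true else false.

Section Mealy.
Variables (Q Sigma : finType).
(* delta i x = δ_i(x),   rho x i = ρ_x(i) *)
Variable delta : Sigma -> Q -> Q.
Variable rho : Q -> Sigma -> Sigma.

Fixpoint rhoS (x : Q) (s : seq Sigma) : seq Sigma :=
  if s is i :: s' then rho x i :: rhoS (delta i x) s' else [::].

(* ρ_{x1...xm} = ρ_{xm} ∘ ... ∘ ρ_{x1} *)
Definition rhoW (u : seq Q) (s : seq Sigma) : seq Sigma :=
  foldl (fun t x => rhoS x t) s u.

Fixpoint deltaS (i : Sigma) (u : seq Q) : seq Q :=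
  if u is x :: u' then delta i x :: deltaS (rho x i) u' else [::].

Definition step (u v : seq Q) : Prop := exists i, deltaS i u = v.

(* u and v lie in the same connected component of A^{|u|}
   (connected components of the underlying directed graph). *)
Definition sameComp : seq Q -> seq Q -> Prop := clos_refl_sym_trans _ step.

Definition connectedA : Prop := forall x y : Q, sameComp [:: x] [:: y].

Definition invertibleA : Prop := forall x, bijective (rho x).
Definition reversibleA : Prop := forall i, bijective (delta i).
Definition bireversibleA : Prop :=
  [/\ invertibleA, reversibleA &
      forall j : Sigma, bijective (fun x : Q => delta (finv (rho x) j) x)].

(* cardinality #C of the component C of the word w (a vertex of t(A)) *)
Definition compCard (w : seq Q) : nat :=
  #|[set t : (size w).-tuple Q | pbool (sameComp w (tval t))]|.

(* A vertex at level m is the component of a word of length m.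
   An edge at level m (from level m to level m+1) is represented by any word
   w of length m+1 of its bottom vertex ⊥(e) = component of w;
   its top vertex is the component of take m w.  Its label is
   compCard w / compCard (take m w). *)

Definition edgeLift (e f : seq Q) : Prop :=
  forall w, sameComp e w -> exists p s, w = p ++ s /\ sameComp f s.

(* p = [:: e_0; ...; e_{r-1}] is a downward path starting at level l *)
Definition isPath (l : nat) (p : seq (seq Q)) : Prop :=
  (forall j, j < size p -> size (nth [::] p j) = l + j + 1) /\
  (forall j, j.+1 < size p ->
     sameComp (take (l + j + 1) (nth [::] p j.+1)) (nth [::] p j)).

Definition pathLift (p q : seq (seq Q)) : Prop :=
  size p = size q /\
  forall j, j < size p -> edgeLift (nth [::] p j) (nth [::] q j).

(* A subtree / path is given as a predicate on (representatives of) edges. *)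
Definition pathIn (S : seq Q -> Prop) (p : seq (seq Q)) : Prop :=
  forall e, e \in p -> S e.

Definition kSelfLiftable (k : nat) (S : seq Q -> Prop) : Prop :=
  forall i p, isPath (i + k) p -> pathIn S p ->
    exists q, isPath i q /\ pathIn S q /\ pathLift p q.

Definition selfLiftable (S : seq Q -> Prop) : Prop :=
  exists k, 0 < k /\ kSelfLiftable k S.

(* A branch: b m is a word representing its vertex at level m. *)
Definition isBranch (b : nat -> seq Q) : Prop :=
  (forall m, size (b m) = m) /\
  (forall m, sameComp (take m (b m.+1)) (b m)).

Definition branchEdges (b : nat -> seq Q) (w : seq Q) : Prop :=
  0 < size w /\ sameComp w (b (size w)).

(* active: the labels are not eventually all 1 *)
Definition activeBranch (b : nat -> seq Q) : Prop :=
  forall M, exists m, M <= m /\ compCard (b m.+1) <> compCard (b m).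

Definition pathEdges (p : seq (seq Q)) (w : seq Q) : Prop :=
  exists e, e \in p /\ sameComp e w.

Definition legitChild (e f : seq Q) : Prop :=
  size f = (size e).+1 /\ sameComp (take (size e) f) e /\ edgeLift f e.

(* p is the trunk of a jungle tree: a finite 1-self-liftable initial path
   whose last edge has at least two legitimate children, all labeled 1. *)
Definition jungleTrunk (p : seq (seq Q)) : Prop :=
  [/\ 0 < size p, isPath 0 p, kSelfLiftable 1 (pathEdges p),
      (exists f1 f2, legitChild (last [::] p) f1 /\ legitChild (last [::] p) f2
                     /\ ~ sameComp f1 f2) &
      (forall f, legitChild (last [::] p) f ->
                 compCard f = compCard (last [::] p))].

Definition jungleEdges (p : seq (seq Q)) (w : seq Q) : Prop :=
  pathEdges p w \/
  [/\ size p < size w, sameComp (take (size p) w) (last [::] p) &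
      edgeLift w (last [::] p)].

(* stems: words of ⊥(p) *)
Definition stem (p : seq (seq Q)) (w : seq Q) : Prop :=
  sameComp w (last [::] p).

(* j-word: a word representing an initial path of j(p) *)
Definition jWord (p : seq (seq Q)) (w : seq Q) : Prop :=
  forall m, 0 < m <= size w -> jungleEdges p (take m w).

Definition simStem (p : seq (seq Q)) (u v : seq Q) : Prop :=
  exists s, jWord p (u ++ s ++ v) /\ forall t, rhoW (u ++ s) t = t.

Definition simClass (p : seq (seq Q)) (g : seq Q) (w : seq Q) : Prop :=
  stem p w /\ simStem p w g.

(* N(u, γ, k) with γ the ~-class of the stem g *)
Definition Ncount (p : seq (seq Q)) (u g : seq Q) (k : nat) : nat :=
  #|[set v : k.-tuple Q |
      pbool (exists w, simClass p g w /\ prefix (u ++ tval v) w)]|.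

Definition admissible (p : seq (seq Q)) (u g : seq Q) (k : nat) : Prop :=
  [/\ jWord p u, size u < size p, stem p g,
      (exists w, simClass p g w /\ prefix u w) & size u + k <= size p].

End Mealy.

(** Reversibility makes [delta] act on each [Q^m] by permutations, so the
    components of [A^m] are the orbits of the words [deltaW r] and the relation
    [sameComp] is just reachability.  An action [w |-> deltaW r w] that sends a
    stem [w] of [gamma] (with prefix [u]) to a stem [w'] of [gamma'] (with
    prefix [u']) preserves [jWord]s, stems and [~], hence maps [gamma] into
    [gamma']; on the suffixes of [u] it acts by the injective map
    [deltaW (rhoW u r)].  This injects the words counted by [N(u, gamma, k)]
    into those counted by [N(u', gamma', k)], and symmetry gives equality. *)
From mathcomp Require Import all_boot.
From Stdlib Require Import Relations ClassicalDescription.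
From mathcomp Require Import zify.

Set Implicit Arguments.
Unset Strict Implicit.
Unset Printing Implicit Defensive.

Lemma iter_periodic (T : finType) (f : seq T -> seq T) :
  (forall a, size (f a) = size a) -> injective f ->
  forall a, exists K, iter K.+1 f a = a.
Proof.
move=> size_f inj_f a.
have sizeF (t : (size a).-tuple T) : size (f t) == size a.
  by rewrite size_f size_tuple.
pose F t := Tuple (sizeF t).
have injF : injective F by move=> t1 t2 /(congr1 val) /inj_f /val_inj.
have valF m t : val (iter m F t) = iter m f (val t) by elim: m => //= m ->.
pose ta : (size a).-tuple T := Tuple (eqxx (size a)).
exists (fingraph.order F ta).-1; rewrite prednK ?fingraph.order_gt0 //.
by have := congr1 val (fingraph.iter_order injF ta); rewrite valF.
Qed.

Lemma pboolP (P : Prop) : pbool P = true <-> P.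
Proof. by rewrite /pbool; case: excluded_middle_informative. Qed.

Section Mealy.
Variables (Q Sigma : finType).
Variables (delta : Sigma -> Q -> Q) (rho : Q -> Sigma -> Sigma).

Local Notation deltaS := (deltaS delta rho).
Local Notation rhoW := (rhoW delta rho).
Local Notation sameComp := (sameComp delta rho).

Definition rhoI (u : seq Q) (i : Sigma) : Sigma := foldl (fun j x => rho x j) i u.

Definition deltaW (r : seq Sigma) (w : seq Q) : seq Q :=
  foldl (fun w i => deltaS i w) w r.

Definition reach (a b : seq Q) : Prop := exists r, deltaW r a = b.

Lemma rhoW_cons u i s : rhoW u (i :: s) = rhoI u i :: rhoW (deltaS i u) s.
Proof. by elim: u i s => [|x u IH] i s //; rewrite /rhoW /= -/(rhoW _ _) IH. Qed.

Lemma rhoW_nil u : rhoW u [::] = [::].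
Proof. by elim: u. Qed.

Lemma rhoW_cat a b t : rhoW (a ++ b) t = rhoW b (rhoW a t).
Proof. exact: foldl_cat. Qed.

Lemma deltaS_cat i a b : deltaS i (a ++ b) = deltaS i a ++ deltaS (rhoI a i) b.
Proof. by elim: a i => [|x a IH] i //=; rewrite IH. Qed.

Lemma size_deltaS i a : size (deltaS i a) = size a.
Proof. by elim: a i => [|x a IH] i //=; rewrite IH. Qed.

Lemma take_deltaS i m a : take m (deltaS i a) = deltaS i (take m a).
Proof. by elim: a i m => [|x a IH] i [|m] //=; rewrite IH. Qed.

Lemma deltaW_cons i r a : deltaW (i :: r) a = deltaW r (deltaS i a).
Proof. by []. Qed.

Lemma deltaW_rcat r1 r2 a : deltaW (r1 ++ r2) a = deltaW r2 (deltaW r1 a).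
Proof. exact: foldl_cat. Qed.

Lemma size_deltaW r a : size (deltaW r a) = size a.
Proof. by elim: r a => [|i r IH] a //; rewrite deltaW_cons IH size_deltaS. Qed.

Lemma take_deltaW r m a : take m (deltaW r a) = deltaW r (take m a).
Proof. by elim: r a => [|i r IH] a //; rewrite !deltaW_cons IH take_deltaS. Qed.

Lemma deltaW_cat r a b : deltaW r (a ++ b) = deltaW r a ++ deltaW (rhoW a r) b.
Proof.
elim: r a b => [|i r IH] a b; first by rewrite rhoW_nil.
by rewrite rhoW_cons !deltaW_cons deltaS_cat IH.
Qed.

Section IdentityWords.
Variable a : seq Q.
Hypothesis rhoW_a : forall t, rhoW a t = t.

Lemma rhoW_deltaW_id r t : rhoW (deltaW r a) t = t.
Proof.
elim: r a rhoW_a t => [|i r IH] b rhoW_b //; rewrite deltaW_cons; apply: IH => t.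
by have := rhoW_b (i :: t); rewrite rhoW_cons => -[].
Qed.

Lemma deltaW_cat_id r b : deltaW r (a ++ b) = deltaW r a ++ deltaW r b.
Proof. by rewrite deltaW_cat rhoW_a. Qed.

End IdentityWords.

Lemma reach_trans a b c : reach a b -> reach b c -> reach a c.
Proof. by move=> [r1 <-] [r2 <-]; exists (r1 ++ r2); rewrite deltaW_rcat. Qed.

Lemma reach_iter r j a : reach a (iter j (deltaW r) a).
Proof. by elim: j => [|j IH]; [exists [::] | apply: reach_trans IH _; exists r]. Qed.

Lemma reach_sameComp a b : reach a b -> sameComp a b.
Proof.
move=> [r <-]; elim: r a => [|i r IH] a; first exact: rst_refl.
by apply: rst_trans (IH _); apply: rst_step; exists i.
Qed.

Lemma sameComp_size a b : sameComp a b -> size a = size b.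
Proof.
by elim=> [x y [i <-]|x|x y _ ->|x y z _ -> _ ->] //; rewrite size_deltaS.
Qed.

Lemma sameComp_take m a b : sameComp a b -> sameComp (take m a) (take m b).
Proof.
elim=> [x y [i <-]|x|x y _ IH|x y z _ H1 _ H2].
- by apply: rst_step; exists i; rewrite take_deltaS.
- exact: rst_refl.
- exact: rst_sym.
- exact: rst_trans H1 H2.
Qed.

Section Reversible.
Hypothesis rev : reversibleA delta.

Lemma deltaS_inj i : injective (deltaS i).
Proof.
move=> a; elim: a i => [|x a IH] i [|y b] //= [/(bij_inj (rev i)) -> /IH -> //].
Qed.

Lemma deltaW_inj r : injective (deltaW r).
Proof. by elim: r => [|i r IH] a b //; rewrite !deltaW_cons => /IH /deltaS_inj. Qed.

Lemma deltaW_periodic r a : exists K, iter K.+1 (deltaW r) a = a.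
Proof. exact: iter_periodic (size_deltaW r) (@deltaW_inj r) a. Qed.

Lemma reach_sym a b : reach a b -> reach b a.
Proof.
move=> [r <-]; have [K] := deltaW_periodic r a; rewrite iterSr => period.
by rewrite -{2}period; apply: reach_iter.
Qed.

Lemma sameComp_reach a b : sameComp a b -> reach a b.
Proof.
elim=> [x y [i <-]|x|x y _|x y z _ H1 _ H2].
- by exists [:: i].
- by exists [::].
- exact: reach_sym.
- exact: reach_trans H1 H2.
Qed.

Lemma edgeLift_cat_id a w e :
  (forall t, rhoW a t = t) -> edgeLift delta rho w e -> edgeLift delta rho (a ++ w) e.
Proof.
move=> rhoW_a lift_w _ /sameComp_reach [r <-]; rewrite deltaW_cat_id //.
have [pre [suf [-> suf_e]]] := lift_w _ (reach_sameComp (ex_intro _ r erefl)).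
by exists (deltaW r a ++ pre), suf; rewrite catA.
Qed.

End Reversible.

Section Jungle.
Variable p : seq (seq Q).
Hypotheses (p_gt0 : 0 < size p) (p_path : isPath delta rho 0 p).

Local Notation stem := (stem delta rho p).
Local Notation jWord := (jWord delta rho p).
Local Notation jungleEdges := (jungleEdges delta rho p).
Local Notation simStem := (simStem delta rho p).

Lemma size_last_path : size (last [::] p) = size p.
Proof.
case: p_path => size_p _; rewrite -nth_last size_p ?prednK //.
by rewrite add0n addn1 prednK.
Qed.

Lemma size_stem w : stem w -> size w = size p.
Proof. by move/sameComp_size; rewrite size_last_path. Qed.

Lemma size_pathEdges w : pathEdges delta rho p w -> size w <= size p.
Proof.
case: p_path => size_p _ [e [/(nthP [::]) [j lt_j <-] /sameComp_size <-]].
by rewrite size_p // add0n addn1.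
Qed.

Lemma jungleEdges_lift w :
  size p < size w -> jungleEdges w -> edgeLift delta rho w (last [::] p).
Proof.
by move=> long [/size_pathEdges|[] //]; rewrite leqNgt long.
Qed.

Lemma jungleEdges_sameComp x y : sameComp x y -> jungleEdges x -> jungleEdges y.
Proof.
move=> xy [[e [pe ex]]|[long top lift]].
- by left; exists e; split=> //; apply: rst_trans ex xy.
- right; split=> [||z yz]; first by rewrite -(sameComp_size xy).
  + by apply: rst_trans top; apply: rst_sym; apply: sameComp_take.
  + by apply: lift; apply: rst_trans xy yz.
Qed.

Lemma jWord_deltaW r w : jWord w -> jWord (deltaW r w).
Proof.
move=> jw m; rewrite size_deltaW take_deltaW => m_range.
by apply: jungleEdges_sameComp (jw m m_range); apply: reach_sameComp; exists r.
Qed.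

Lemma stem_deltaW r w : stem w -> stem (deltaW r w).
Proof. by apply: rst_trans; apply: rst_sym; apply: reach_sameComp; exists r. Qed.

Lemma simStem_deltaW r y a : simStem y a -> simStem (deltaW r y) (deltaW r a).
Proof.
move=> [s [jw rhoW_ys]]; exists (deltaW (rhoW y r) s); split.
- by have := jWord_deltaW (r := r) jw; rewrite catA deltaW_cat_id // deltaW_cat catA.
- by rewrite -deltaW_cat; apply: rhoW_deltaW_id.
Qed.

Hypothesis rev : reversibleA delta.

Lemma jungleEdges_cat_id y s a x :
  stem y -> stem a -> (forall t, rhoW (y ++ s) t = t) ->
  0 < size x -> jungleEdges (a ++ x) -> jungleEdges ((y ++ s) ++ a ++ x).
Proof.
move=> Sy Sa rhoW_ys x_gt0 ax; have [ny na] := (size_stem Sy, size_stem Sa).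
right; split.
- by rewrite !size_cat ny; lia.
- by rewrite -catA takel_cat ?ny // -ny take_size.
- apply: edgeLift_cat_id => //; apply: jungleEdges_lift ax.
  by rewrite size_cat na; lia.
Qed.

Lemma simStem_trans y a b : stem y -> stem a ->
  simStem y a -> simStem a b -> simStem y b.
Proof.
move=> Sy Sa [s [jw1 id1]] [s' [jw2 id2]]; exists (s ++ a ++ s'); split; last first.
  by move=> t; rewrite !catA -catA rhoW_cat id1 id2.
move=> m m_range.
have -> : y ++ (s ++ a ++ s') ++ b = (y ++ s ++ a) ++ (s' ++ b) by rewrite !catA.
case/andP: m_range => m_gt0 m_le.
case: (leqP m (size (y ++ s ++ a))) => [short|long].
  by rewrite takel_cat //; apply: jw1; rewrite m_gt0.
rewrite take_cat ltnNge (ltnW long) /=.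
set x := take _ (s' ++ b).
have x_gt0 : 0 < size x.
  rewrite /x size_take; case: ifP => _; first by rewrite subn_gt0.
  by move: m_le long; rewrite !size_cat; lia.
have -> : (y ++ s ++ a) ++ x = (y ++ s) ++ a ++ x by rewrite !catA.
apply: jungleEdges_cat_id => //.
have take_x : take (size x) (s' ++ b) = x.
  rewrite /x size_take; case: ifP => // /negbT; rewrite -leqNgt => oversize.
  by rewrite take_size take_oversize.
have := jw2 (size a + size x); rewrite takeD take_size_cat // drop_size_cat // take_x.
apply; rewrite addn_gt0 x_gt0 orbT /= size_cat leq_add2l.
by rewrite /x size_take_min geq_minr.
Qed.

Lemma simStem_sym y a : stem y -> stem a -> simStem y a -> simStem a y.
Proof.
move=> Sy Sa ya; have [r Fy] : reach y a.
  by apply: (sameComp_reach rev); apply: rst_trans Sy _; apply: rst_sym.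
set F := deltaW r in Fy.
have stem_iter j : stem (iter j F y).
  by elim: j => //= j; apply: stem_deltaW.
have step j : simStem (iter j F y) (iter j.+1 F y).
  by elim: j => [|j]; [rewrite /= Fy | apply: simStem_deltaW].
have a_iter j : simStem a (iter j.+2 F y).
  elim: j => [|j IH]; first by have := step 1; rewrite /= Fy.
  exact: simStem_trans (stem_iter j.+2) IH (step j.+2).
have [[|K]] := deltaW_periodic rev r y; rewrite -/F.
- by rewrite /= Fy => ay; rewrite ay in ya *.
- by move <-; apply: a_iter.
Qed.

Lemma simClass_deltaW r g g' w y : stem g ->
  simClass delta rho p g w -> simClass delta rho p g' (deltaW r w) ->
  simClass delta rho p g y -> simClass delta rho p g' (deltaW r y).
Proof.
move=> Sg [Sw wg] [SFw Fwg'] [Sy yg].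
have SFy := stem_deltaW r Sy; have SFg := stem_deltaW r Sg.
split=> //; apply: (simStem_trans SFy SFw _ Fwg').
apply: (simStem_trans SFy SFg (simStem_deltaW r yg)).
exact: simStem_sym SFw SFg (simStem_deltaW r wg).
Qed.

Lemma Ncount_le u g u' g' k :
  admissible delta rho p u g k -> admissible delta rho p u' g' k ->
  size u = size u' -> Ncount delta rho p u g k <= Ncount delta rho p u' g' k.
Proof.
move=> [_ _ Sg [w [wg /prefixP [w1 Ew]]] _] [_ _ _ [w' [wg' /prefixP [w1' Ew']]] _] size_u.
have [r Fw] : reach w w'.
  by apply: (sameComp_reach rev); apply: rst_trans wg.1 _; apply: rst_sym wg'.1.
have Fu : deltaW r u = u'.
  have := congr1 (take (size u)) Fw.
  by rewrite take_deltaW Ew Ew' !take_size_cat.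
have FwC : simClass delta rho p g' (deltaW r w) by rewrite Fw.
have size_h (v : k.-tuple Q) : size (deltaW (rhoW u r) v) == k.
  by rewrite size_deltaW size_tuple.
pose h v := Tuple (size_h v).
have inj_h : injective h.
  by move=> v1 v2 /(congr1 val) /deltaW_inj /val_inj; apply.
rewrite /Ncount -(card_imset _ inj_h); apply/subset_leq_card/subsetP => z.
case/imsetP=> v; rewrite inE => /pboolP [y [yg /prefixP [rest Ey]]] ->.
rewrite inE; apply/pboolP; exists (deltaW r y); split.
  exact: simClass_deltaW Sg wg FwC yg.
by apply/prefixP; exists (deltaW (rhoW (u ++ v) r) rest); rewrite Ey !deltaW_cat Fu rhoW_cat.
Qed.

End Jungle.

End Mealy.

Theorem proposition5p13 (Q Sigma : finType)
  (delta : Sigma -> Q -> Q) (rho : Q -> Sigma -> Sigma) :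
  0 < #|Q| -> 0 < #|Sigma| ->
  connectedA delta rho ->
  bireversibleA delta rho ->
  ~ (exists b, isBranch delta rho b /\ activeBranch delta rho b /\
               selfLiftable delta rho (branchEdges delta rho b)) ->
  forall p : seq (seq Q), jungleTrunk delta rho p ->
  forall (u g u' g' : seq Q) (k : nat),
    admissible delta rho p u g k -> admissible delta rho p u' g' k ->
    size u = size u' ->
    Ncount delta rho p u g k = Ncount delta rho p u' g' k.
Proof.
move=> _ _ _ [_ rev _] _ p [p_gt0 p_path _ _ _] u g u' g' k adm adm' size_u.
by apply/eqP; rewrite eqn_leq !(Ncount_le p_gt0 p_path rev) // size_u.
Qed.
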